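(* Let $p$ be an odd prime, $n\geq 2$, $1\leq s\leq p-1$, and $t$ an integer with $sp^{n-2}\leq t\leq p^{n-1}-1$. Then $\frac{(sp^{n-2})!}{t!}{t \brace sp^{n-2}}_{\leq p-1}\in\mathbb{Z}_{(p)}$ and \[\frac{(sp^{n-2})!}{t!}{t \brace sp^{n-2}}_{\leq p-1}\equiv \begin{cases}0 \pmod p, & \text{if } p^{n-2}\nmid t,\\ \frac{s!}{(t/p^{n-2})!}{t/p^{n-2} \brace s}\pmod p, & \text{if } p^{n-2}\mid t.\end{cases}\]
   Context: ${N \brace k}$ denotes the Stirling number of the second kind (number of partitions of an $N$-set into $k$ nonempty blocks). For $r\ge1$, the restricted Stirling number ${N \brace k}_{\leq r}$ is $\sum \frac{N!}{\prod_{m=1}^r j_m!(m!)^{j_m}}$ over $(j_1,\dots,j_r)\in\mathbb{N}^r$ with $\sum j_m=k$, $\sum m j_m=N$ (number of partitions of an $N$-set into $k$ nonempty blocks of size at most $r$). Congruences are in $\mathbb{Z}_{(p)}$. *)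

From mathcomp Require Import all_boot all_order all_algebra.
Set Implicit Arguments. Unset Strict Implicit. Unset Printing Implicit Defensive.
Import Order.TTheory GRing.Theory Num.Theory.
Local Open Scope ring_scope.

Fixpoint stirling2 (N k : nat) : nat :=
  match N, k with
  | 0, 0 => 1
  | 0, _.+1 => 0
  | _.+1, 0 => 0
  | N'.+1, k'.+1 => (k'.+1 * stirling2 N' k + stirling2 N' k')%N
  end.

(* Index m : 'I_r stands for block size m+1;
   each j_m ranges over 0..N, which loses nothing since m j_m <= N. *)
Definition rstirling (r N k : nat) : rat :=
  \sum_(j : {ffun 'I_r -> 'I_N.+1} |
          ((\sum_(m < r) (j m : nat) == k)%N &&
           (\sum_(m < r) (m.+1 * j m) == N)%N))
    (N`!)%:R / \prod_(m < r) (((j m : nat)`!)%:R * ((m.+1)`!)%:R ^+ (j m : nat)).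

Definition pint (p : nat) (x : rat) : bool := ~~ (p%:Z %| denq x)%Z.

Definition pcong (p : nat) (x y : rat) : bool := pint p ((x - y) / p%:R).

From mathcomp Require Import all_boot all_order all_algebra finfield.
From mathcomp Require Import zify ring.
Import Order.TTheory GRing.Theory Num.Theory.
Local Open Scope ring_scope.

(* With r = p - 1, (k!/t!) {t brace k}_{<= r} is the coefficient of x^t in
   E^k, where E = x + x^2/2! + ... + x^r/r!.  The polynomial P = r! E has
   integer coefficients and r! is prime to p, so the quantity is A / (r!)^k
   with A = [x^t] P^k an integer.  For k = s p^m, Frobenius gives
   P^k = (P^s)(x^(p^m)) mod p: hence A = 0 mod p unless p^m | t, and
   otherwise A = [x^u] P^s with u = t / p^m <= r.  Since E agrees with
   e^x - 1 up to degree r, [x^u] E^s = s! {u brace s} / u!, and Fermat gives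
   (r!)^k = (r!)^s mod p. *)

Lemma natr_fact_neq0 (R : numDomainType) n : (n`!)%:R != 0 :> R.
Proof. by rewrite pnatr_eq0 -lt0n fact_gt0. Qed.

Section BlockTypes.
Variables (R : numFieldType) (r B : nat) (w : 'I_r -> R).
Local Notation J := {ffun 'I_r -> 'I_B.+1}.

Definition block_type (k N : nat) (j : J) : bool :=
  ((\sum_(m < r) (j m : nat) == k)%N && (\sum_(m < r) (m.+1 * j m) == N)%N).

Definition block_type_weight (j : J) : R :=
  \prod_(m < r) (w m ^+ j m / ((j m : nat)`!)%:R).

Definition block_type_sum (k N : nat) : R :=
  \sum_(j | block_type k N j) block_type_weight j.

Definition block_poly : {poly R} := \sum_(m < r) w m *: 'X^(m.+1).

Definition dec_at (m : 'I_r) (j : J) : J :=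
  [ffun i => if i == m then inord (j i).-1 else j i].

Definition inc_at (m : 'I_r) (j : J) : J :=
  [ffun i => if i == m then inord (j i).+1 else j i].

Lemma dec_at_id (m : 'I_r) (j : J) : (dec_at m j m : nat) = (j m).-1.
Proof. by rewrite ffunE eqxx inordK // (leq_ltn_trans (leq_pred _)). Qed.

Lemma dec_at_neq (m i : 'I_r) (j : J) : i != m -> dec_at m j i = j i.
Proof. by rewrite ffunE => /negPf ->. Qed.

Lemma sum_dec_at (m : 'I_r) (c : 'I_r -> nat) (j : J) : (0 < j m)%N ->
  (\sum_(i < r) c i * dec_at m j i + c m = \sum_(i < r) c i * j i)%N.
Proof.
move=> jm_gt0; rewrite [RHS](bigD1 m) //= (bigD1 m) //= dec_at_id.
rewrite (eq_bigr (fun i => c i * j i)%N); last by move=> i /dec_at_neq ->.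
by rewrite -{2}(prednK jm_gt0) mulnS; lia.
Qed.

Lemma block_type_bound {k N} {j : J} (m : 'I_r) :
  block_type k N j -> (m.+1 * j m <= N)%N.
Proof. by case/andP=> _ /eqP <-; rewrite (bigD1 m) //= leq_addr. Qed.

Lemma block_type_lt {k N} {j : J} (m : 'I_r) :
  (N < B)%N -> block_type k N j -> (j m < B)%N.
Proof.
by move=> NB /(block_type_bound m); rewrite mulSn => jN; apply: leq_trans NB; lia.
Qed.

Lemma block_type_dec_at k N {j : J} {m : 'I_r} : (0 < j m)%N ->
  block_type k.+1 N j = (m.+1 <= N)%N && block_type k (N - m.+1) (dec_at m j).
Proof.
move=> jm_gt0; rewrite /block_type.
have e1 := sum_dec_at m (fun _ => 1%N) j jm_gt0.
have e2 := sum_dec_at m (fun i : 'I_r => i.+1) j jm_gt0.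
under eq_bigr do rewrite -[nat_of_ord _]mul1n.
under [X in (X == k)%N]eq_bigr do rewrite -[nat_of_ord _]mul1n.
rewrite -e1 -e2 /=.
case: (leqP m.+1 N) => /= mN; last by apply/negbTE/nandP; right; apply/eqP; lia.
by apply/andP/andP; case=> /eqP h1 /eqP h2; split; apply/eqP; lia.
Qed.

Lemma inc_atK (m : 'I_r) :
  {in [pred j : J | j m < B]%N, cancel (inc_at m) (dec_at m)}.
Proof.
move=> j jmB; apply/ffunP => i; rewrite !ffunE.
by case: eqP => [->|//]; rewrite inordK ?ltnS //; apply: inord_val.
Qed.

Lemma dec_atK (m : 'I_r) :
  {in [pred j : J | 0 < j m]%N, cancel (dec_at m) (inc_at m)}.
Proof.
move=> j jm_gt0; apply/ffunP => i; rewrite ffunE.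
case: eqP => [->|/eqP /dec_at_neq //]; apply: val_inj.
by rewrite dec_at_id /= inordK prednK.
Qed.

Lemma block_type_sum_dec_at (m : 'I_r) k N (F : J -> R) : (N <= B)%N ->
  \sum_(j | block_type k.+1 N j && (0 < j m)%N) F (dec_at m j) =
  if (m.+1 <= N)%N then \sum_(j | block_type k (N - m.+1) j) F j else 0.
Proof.
move=> NB; case: ifP => mN; last first.
  rewrite big1 // => j /andP [tj jm_gt0].
  by move: tj; rewrite (block_type_dec_at _ _ jm_gt0) mN.
symmetry; rewrite (reindex_onto (dec_at m) (inc_at m)) => [|j tj]; last first.
  by apply: inc_atK; rewrite inE (block_type_lt m _ tj) //; lia.
apply: eq_bigl => j; apply/andP/andP => [[tj /eqP jK]|[tj jm_gt0]].
  have jm_gt0 : (0 < j m)%N.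
    by rewrite -jK ffunE eqxx inordK // ltnS (block_type_lt m _ tj) //; lia.
  by rewrite (block_type_dec_at _ _ jm_gt0) mN.
move: tj; rewrite (block_type_dec_at _ _ jm_gt0) mN => tj.
by rewrite dec_atK.
Qed.

Lemma block_type_weight_dec_at (m : 'I_r) (j : J) : (0 < j m)%N ->
  block_type_weight j *+ j m = w m * block_type_weight (dec_at m j).
Proof.
move=> jm_gt0; rewrite /block_type_weight (bigD1 m) //= [in RHS](bigD1 m) //=.
rewrite dec_at_id [in RHS](eq_bigr (fun i => w i ^+ j i / ((j i : nat)`!)%:R)).
  2: by move=> i /dec_at_neq ->.
rewrite -mulrnAl mulrA; congr (_ * _); rewrite -(prednK jm_gt0).
rewrite factS natrM exprS -mulr_natr; field.
by rewrite natr_fact_neq0 nat1r pnatr_eq0.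
Qed.

(* Write k.+1 as the number \sum_m j m of blocks, then remove one block of
   size m.+1. *)
Lemma block_type_sumS k N : (N <= B)%N ->
  block_type_sum k.+1 N *+ k.+1 =
  \sum_(m < r) w m * (if (m.+1 <= N)%N then block_type_sum k (N - m.+1) else 0).
Proof.
move=> NB; rewrite /block_type_sum -sumrMnl.
under eq_bigr => j /andP [/eqP <- _] do rewrite -sumrMnr.
rewrite exchange_big /=; apply: eq_bigr => m _.
rewrite (bigID (fun j : J => 0 < j m)%N) /= [X in _ + X]big1 ?addr0; last first.
  by move=> j /andP [_]; rewrite -eqn0Ngt => /eqP ->.
under eq_bigr => j /andP [_ jm_gt0] do rewrite block_type_weight_dec_at //.
by rewrite -mulr_sumr block_type_sum_dec_at //; case: ifP; rewrite ?mulr0.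
Qed.

Lemma block_type0 N (j : J) :
  block_type 0 N j = (N == 0)%N && (j == [ffun => ord0]).
Proof.
apply/idP/andP => [/andP [/eqP j0 /eqP <-]|[/eqP -> /eqP ->]]; last first.
  by rewrite /block_type !big1 // => i _; rewrite ffunE ?muln0.
have {}j0 i : (j i : nat) = 0%N.
  by apply/eqP; move/eqP: j0; rewrite sum_nat_eq0 => /forall_inP; apply.
have -> : j = [ffun => ord0].
  by apply/ffunP => i; apply: val_inj; rewrite /= ffunE j0.
by split; rewrite // big1 // => i _; rewrite ffunE muln0.
Qed.

Lemma block_type_sum_coef k N : (N <= B)%N ->
  block_type_sum k N * (k`!)%:R = (block_poly ^+ k)`_N.
Proof.
elim: k N => [|k IHk] N NB.
  rewrite fact0 mulr1 expr0 coef1 /block_type_sum (eq_bigl _ _ (block_type0 N)).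
  case: N NB => [|N] _ /=; last by rewrite big_pred0.
  rewrite (big_pred1_eq _ [ffun => ord0]) /block_type_weight.
  by rewrite big1 // => i _; rewrite ffunE expr0 div1r invr1.
rewrite factS natrM mulrA [_ * k.+1%:R]mulr_natr block_type_sumS // mulr_suml.
rewrite exprS mulr_suml coef_sum; apply: eq_bigr => m _.
rewrite -scalerAl coefZ coefXnM -mulrA; congr (_ * _).
by case: ifP => mN; rewrite ltnNge mN /= ?mul0r // IHk //; lia.
Qed.

End BlockTypes.

Arguments block_poly {R r} w.
Arguments block_type_sum {R r} B w k N.
Arguments block_type_sum_coef {R r B w k N}.

Section TruncatedExponential.
Variables (R : numFieldType) (r : nat).

Definition expm1_trunc : {poly R} := block_poly (fun m : 'I_r => ((m.+1)`!)%:R^-1).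
Local Notation E := expm1_trunc.

Lemma coef_expm1_trunc i : E`_i = if (0 < i <= r)%N then ((i`!)%:R)^-1 else 0.
Proof.
rewrite coef_sumMXn; case: i => [|i] /=; first by rewrite big_pred0.
case: ltnP => ir; first by rewrite (big_pred1 (Ordinal ir)).
by rewrite big_pred0 // => m; rewrite eqSS ltn_eqF // (leq_trans (ltn_ord m)).
Qed.

Lemma coef_deriv_expm1_trunc i : (i < r)%N -> E^`()`_i = (1 + E)`_i.
Proof.
move=> ir; rewrite coef_deriv coefD coef1 !coef_expm1_trunc ir /=.
case: i ir => [|i] ir /=; first by rewrite addr0 invr1.
rewrite ltnW // add0r factS natrM -mulr_natr; field.
by rewrite natr_fact_neq0 -natrD pnatr_eq0.
Qed.

Lemma coef_expm1_truncXS s u : (u < r)%N ->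
  (E ^+ s.+1)`_u.+1 *+ u.+1 = ((E ^+ s)`_u + (E ^+ s.+1)`_u) *+ s.+1.
Proof.
move=> ur; rewrite -coef_deriv deriv_exp coefMn coefM; congr (_ *+ _).
under eq_bigr => j _ do
  rewrite coef_deriv_expm1_trunc ?(leq_ltn_trans (leq_ord j)) //.
by rewrite -coefM mulrDl mul1r exprS coefD.
Qed.

Lemma expm1_trunc_stirling2 s u : (u <= r)%N ->
  (E ^+ s)`_u * (u`!)%:R = (s`!)%:R * (stirling2 u s)%:R.
Proof.
elim: u s => [|u IHu] s ur.
  have coef0 s' : (E ^+ s')`_0 = (s' == 0)%:R.
    elim: s' => [|s' IH]; first by rewrite expr0 coef1.
    by rewrite exprS coef0M IH coef_expm1_trunc mul0r.
  by rewrite coef0; case: s => [|s]; rewrite ?mul1r ?mul0r ?mulr0.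
case: s => [|s]; first by rewrite expr0 coef1 mul0r mulr0.
have e0 := IHu s (ltnW ur); have e1 := IHu s.+1 (ltnW ur).
rewrite [(u.+1)`!]factS natrM mulrA [_ * u.+1%:R]mulr_natr coef_expm1_truncXS //.
rewrite -[X in X * _ = _]mulr_natr mulrAC mulrDl e0 e1 /=.
rewrite [(s.+1)`!]factS !natrM natrD natrM; ring.
Qed.

End TruncatedExponential.

Lemma rstirling_coef r N k :
  (k`!)%:R / (N`!)%:R * rstirling r N k = (expm1_trunc rat r ^+ k)`_N.
Proof.
have -> : rstirling r N k =
    (N`!)%:R * block_type_sum N (fun m : 'I_r => ((m.+1)`!)%:R^-1) k N.
  rewrite mulr_sumr; apply: eq_bigr => j _; rewrite -prodfV; congr (_ * _).
  by apply: eq_bigr => m _; rewrite invfM exprVn mulrC.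
by rewrite -(block_type_sum_coef (leqnn N)) mulrA mulfVK ?natr_fact_neq0 // mulrC.
Qed.

Definition expm1_trunc_int (r : nat) : {poly int} :=
  \sum_(m < r) (r`! %/ (m.+1)`!)%:Z *: 'X^(m.+1).

Lemma map_expm1_trunc_int (R : numFieldType) r :
  map_poly intr (expm1_trunc_int r) = (r`!)%:R *: expm1_trunc R r.
Proof.
apply/polyP => i; rewrite coef_map coefZ !coef_sumMXn /= rmorph_sum mulr_sumr.
apply: eq_bigr => m _; rewrite /= -pmulrn natr_div ?unitfE ?natr_fact_neq0 //.
by rewrite (fact_split (ltn_ord m)) dvdn_mulr.
Qed.

Lemma coef_expm1_trunc_intX (R : numFieldType) r k N :
  ((expm1_trunc_int r ^+ k)`_N)%:~R = (r`!)%:R ^+ k * (expm1_trunc R r ^+ k)`_N :> R.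
Proof. by rewrite -coef_map rmorphXn /= map_expm1_trunc_int exprZn coefZ. Qed.

Lemma expm1_trunc_int_stirling2 r s u : (u <= r)%N ->
  (expm1_trunc_int r ^+ s)`_u * (u`!)%:Z = (r`! ^ s * s`! * stirling2 u s)%:Z.
Proof.
move=> ur; apply: (intr_inj (R := rat)).
rewrite intrM (coef_expm1_trunc_intX rat) -!pmulrn !natrM natrX -mulrA.
by rewrite -[LHS]mulrA expm1_trunc_stirling2.
Qed.

Lemma rstirling_coef_int r N k :
  (k`!)%:R / (N`!)%:R * rstirling r N k =
  ((expm1_trunc_int r ^+ k)`_N)%:~R / ((r`! ^ k)%N%:Z)%:~R.
Proof.
rewrite rstirling_coef (coef_expm1_trunc_intX rat) -pmulrn natrX [_ ^+ k * _]mulrC.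
by rewrite mulfK // expf_neq0 // natr_fact_neq0.
Qed.

Section PrimeField.
Variables (p : nat) (p_pr : prime p).

Lemma Fp_expp (x : 'F_p) : x ^+ p = x.
Proof. by have := expf_card x; rewrite card_Fp. Qed.

Lemma Fp_expXn (x : 'F_p) m : x ^+ (p ^ m) = x.
Proof. by elim: m => [|m IHm]; rewrite ?expr1 // expnSr exprM IHm Fp_expp. Qed.

Lemma Fp_poly_expp (f : {poly 'F_p}) : f ^+ p = f \Po 'X^p.
Proof.
have pchar_p : p \in [pchar {poly 'F_p}] by rewrite pchar_poly pchar_Fp.
rewrite comp_polyE -{1}[f]coefK poly_def -(pFrobenius_autE pchar_p) rmorph_sum.
by apply: eq_bigr => i _; rewrite /= pFrobenius_autE exprZn Fp_expp -!exprM mulnC.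
Qed.

Lemma Fp_poly_expXn (f : {poly 'F_p}) m : f ^+ (p ^ m) = f \Po 'X^(p ^ m).
Proof.
elim: m => [|m IHm]; first by rewrite expr1 comp_polyXr.
by rewrite expnSr exprM IHm Fp_poly_expp -comp_polyA comp_Xn_poly -exprM mulnC.
Qed.

Lemma coef_int_poly_Fp_expXn (f : {poly int}) s m i :
  (((f ^+ (s * p ^ m))`_i)%:~R : 'F_p) =
  if (p ^ m %| i)%N then ((f ^+ s)`_(i %/ p ^ m))%:~R else 0.
Proof.
rewrite -!coef_map !rmorphXn /= exprM Fp_poly_expXn.
by rewrite coef_comp_poly_Xn ?expn_gt0 ?prime_gt0.
Qed.

Lemma expm1_trunc_int_coef_ndvd (r s m t : nat) : ~~ (p ^ m %| t)%N ->
  (p%:Z %| (expm1_trunc_int r ^+ (s * p ^ m))`_t)%Z.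
Proof.
move=> pt; rewrite (dvdz_pcharf (pchar_Fp p_pr)).
by rewrite coef_int_poly_Fp_expXn (negbTE pt).
Qed.

Lemma expm1_trunc_int_coef_congr (r s m t : nat) :
  (p ^ m %| t)%N -> (t %/ p ^ m <= r)%N ->
  (p%:Z %| (expm1_trunc_int r ^+ (s * p ^ m))`_t * ((t %/ p ^ m)`!)%N%:Z
           - (s`! * stirling2 (t %/ p ^ m) s)%N%:Z * (r`! ^ (s * p ^ m))%N%:Z)%Z.
Proof.
move=> pt ur; rewrite (dvdz_pcharf (pchar_Fp p_pr)) rmorphB !rmorphM /=.
rewrite coef_int_poly_Fp_expXn pt -rmorphM expm1_trunc_int_stirling2 //=.
by rewrite -!pmulrn expnM natrX Fp_expXn subr_eq0; apply/eqP; ring.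
Qed.

End PrimeField.

Lemma prime_ndvd_fact p m : prime p -> (m < p)%N -> ~~ (p %| m`!)%N.
Proof.
move=> p_pr; elim: m => [|m IHm] mp; first by rewrite dvdn1 gtn_eqF ?prime_gt1.
by rewrite factS Euclid_dvdM // negb_or IHm 1?ltnW // gtnNdvd.
Qed.

Lemma prime_ndvdz_factX p m j :
  prime p -> (m < p)%N -> ~~ (p%:Z %| (m`! ^ j)%N%:Z)%Z.
Proof.
by move=> p_pr mp; rewrite dvdzE /= Euclid_dvdX // negb_and prime_ndvd_fact.
Qed.

Lemma divn_expn_ltn p m t : (0 < p)%N -> (t < p ^ m.+1)%N -> (t %/ p ^ m < p)%N.
Proof. by move=> p_gt0; rewrite ltn_divLR ?expn_gt0 ?p_gt0 // -expnS. Qed.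

Lemma pint_frac p (a d : int) : ~~ (p%:Z %| d)%Z -> pint p (a%:~R / d%:~R).
Proof.
rewrite /pint; case: divqP => [d0|k x kn0]; first by rewrite dvdz0.
by apply: contra => /dvdz_mull.
Qed.

Lemma pcong_frac p (a b d e : int) : prime p ->
  ~~ (p%:Z %| d)%Z -> ~~ (p%:Z %| e)%Z -> (p%:Z %| a * e - b * d)%Z ->
  pcong p (a%:~R / d%:~R) (b%:~R / e%:~R).
Proof.
move=> p_pr pd pe /dvdzP [c ade]; rewrite /pcong.
have intr_neq0 z : ~~ (p%:Z %| z)%Z -> z%:~R != 0 :> rat.
  by rewrite intr_eq0; apply: contraNneq => ->; rewrite dvdz0.
have p_neq0 : p%:R != 0 :> rat by rewrite pnatr_eq0 -lt0n prime_gt0.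
have -> : (a%:~R / d%:~R - b%:~R / e%:~R) / p%:R = c%:~R / (d * e)%:~R :> rat.
  have := congr1 (intr : int -> rat) ade; rewrite intrB !intrM => ade_rat.
  rewrite -[c%:~R](mulfK p_neq0) -ade_rat; field.
  by rewrite !intr_neq0.
by apply: pint_frac; rewrite dvdzE abszM Euclid_dvdM // negb_or -!dvdzE pd.
Qed.

Theorem lemma3p14 (p n s t : nat) :
  prime p -> odd p -> (2 <= n)%N -> (1 <= s <= p - 1)%N ->
  (s * p ^ (n - 2) <= t <= p ^ (n - 1) - 1)%N ->
  pint p (((s * p ^ (n - 2))`!)%:R / (t`!)%:R * rstirling (p - 1) t (s * p ^ (n - 2)))
  /\
  (if (p ^ (n - 2) %| t)%N then
     pcong p (((s * p ^ (n - 2))`!)%:R / (t`!)%:R * rstirling (p - 1) t (s * p ^ (n - 2)))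
             ((s`!)%:R / ((t %/ p ^ (n - 2))`!)%:R * (stirling2 (t %/ p ^ (n - 2)) s)%:R)
   else
     pcong p (((s * p ^ (n - 2))`!)%:R / (t`!)%:R * rstirling (p - 1) t (s * p ^ (n - 2))) 0).
Proof.
(* Only the primality of p, n >= 2 and t < p ^ (n - 1) are used. *)
move=> p_pr _ n_ge2 _ /andP [_ t_lt].
have p_gt0 := prime_gt0 p_pr.
have r_lt_p : (p - 1 < p)%N by lia.
have {t_lt} t_lt : (t < p ^ (n - 2).+1)%N.
  have -> : (n - 2).+1 = (n - 1)%N by lia.
  by have := expn_gt0 p (n - 1); rewrite p_gt0; lia.
rewrite rstirling_coef_int; split; first exact/pint_frac/prime_ndvdz_factX.
case: ifP => q_t.
  have u_lt_p : (t %/ p ^ (n - 2) < p)%N by apply: divn_expn_ltn.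
  rewrite mulrAC -natrM !pmulrn; apply: pcong_frac => //.
  - exact: prime_ndvdz_factX.
  - by rewrite -[_`!]expn1; apply: prime_ndvdz_factX.
  - by apply: expm1_trunc_int_coef_congr => //; lia.
have -> : 0 = 0%:~R / 1%:~R :> rat by rewrite mul0r.
apply: pcong_frac => //.
- exact: prime_ndvdz_factX.
- by rewrite dvdzE dvdn1 gtn_eqF ?prime_gt1.
- by rewrite mulr1 mul0r subr0 expm1_trunc_int_coef_ndvd ?q_t.
Qed.
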